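(* Let $g$ be a constant indefinite pseudo-Riemann metric on $\mathbb R^4$ (i.e. of signature $(-+++)$, $(+---)$ or $(--++)$), let $C_1\in\mathbb R\setminus\{0\}$ and $C_2\in\mathbb R$, and let $\kappa=C_1\ast_g+C_2\operatorname{Id}\in\Omega^2_2(\mathbb R^4)$. Then $\kappa$ is not decomposable.
   Context: A tensor on $\mathbb R^4$ is constant if its components are constant in a fixed global coordinate system $\{x^i\}_{i=0}^3$. $\varepsilon_{ijkl}$ denotes the Levi-Civita permutation symbol. $\Omega^2_2(\mathbb R^4)$ is the space of tensor fields $\kappa=\frac18\kappa^{ij}_{rs}\,dx^r\wedge dx^s\otimes\partial_i\wedge\partial_j$ (components antisymmetric in $ij$ and $rs$), acting on 2-forms by $\kappa(\frac12F_{ij}dx^i\wedge dx^j)=\frac12G_{ij}dx^i\wedge dx^j$, $G_{ij}=\frac12\kappa^{ab}_{ij}F_{ab}$. $\operatorname{Id}^{ij}_{rs}=\delta^i_r\delta^j_s-\delta^i_s\delta^j_r$. Hodge star: $(\ast_g)^{ij}_{rs}=\sqrt{|\det g|}\,g^{ia}g^{jb}\varepsilon_{abrs}$ with $g^{ij}$ the inverse of $g_{ij}$. For a bivector $A=\frac12A^{ij}\partial_i\wedge\partial_j$ and 2-form $F$, $F(A)=\frac12F_{ij}A^{ij}$. A plane wave for $\kappa$ is a pair $F=\operatorname{Re}\{e^{i\Phi}X\}$, $G=\operatorname{Re}\{e^{i\Phi}Y\}$ with $\Phi:\mathbb R^4\to\mathbb R$, $d\Phi$ constant and nonzero, $X,Y$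 constant complex 2-forms not both zero, solving $dF=0$, $dG=0$, $G=\kappa(F)$. $\kappa$ (constant) is decomposable if there exist nonzero constant bivectors $A,B$ such that every plane wave $F,G$ of $\kappa$ satisfies $F(A)=0$ identically or $F(B)=0$ identically. *)

From Stdlib Require Import Reals.
Open Scope R_scope.

(* Coordinate indices 0..3 of the fixed global chart {x^i} on R^4. *)
Inductive idx : Set := I0 | I1 | I2 | I3.

Definition idx_eq_dec (a b : idx) : {a = b} + {a <> b}.
Proof. decide equality. Defined.

Definition idxR (a : idx) : R :=
  match a with I0 => 0 | I1 => 1 | I2 => 2 | I3 => 3 end.

Definition sumI (f : idx -> R) : R := f I0 + f I1 + f I2 + f I3.

Definition delta (a b : idx) : R := if idx_eq_dec a b then 1 else 0.

(* Levi-Civita symbol: sign of the permutation (0 if an index repeats),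
   computed as the normalised Vandermonde product. *)
Definition eps (a b c d : idx) : R :=
  let A := idxR a in let B := idxR b in let C := idxR c in let D := idxR d in
  ((B - A) * (C - A) * (D - A) * (C - B) * (D - B) * (D - C)) / 12.

Definition point := idx -> R.
Definition mat := idx -> idx -> R.                 (* g_{ij}, g^{ij}, 2-forms, bivectors *)
Definition tensor22 := idx -> idx -> idx -> idx -> R. (* kappa^{ij}_{rs} = k i j r s *)

Definition symmetric (g : mat) : Prop := forall i j, g i j = g j i.
Definition antisymmetric (X : mat) : Prop := forall i j, X i j = - X j i.

Definition det4 (g : mat) : R :=
  sumI (fun a => sumI (fun b => sumI (fun c => sumI (fun d =>
    eps a b c d * g I0 a * g I1 b * g I2 c * g I3 d)))).

Definition is_inverse (g ginv : mat) : Prop :=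
  forall i k, sumI (fun j => g i j * ginv j k) = delta i k.

Definition indefinite (g : mat) : Prop :=
  (exists v : idx -> R, sumI (fun i => sumI (fun j => g i j * v i * v j)) > 0) /\
  (exists w : idx -> R, sumI (fun i => sumI (fun j => g i j * w i * w j)) < 0).

Definition Id22 : tensor22 :=
  fun i j r s => delta i r * delta j s - delta i s * delta j r.

Definition hodge (g ginv : mat) : tensor22 :=
  fun i j r s => sqrt (Rabs (det4 g)) *
    sumI (fun a => sumI (fun b => ginv i a * ginv j b * eps a b r s)).

Definition kappa_of (g ginv : mat) (C1 C2 : R) : tensor22 :=
  fun i j r s => C1 * hodge g ginv i j r s + C2 * Id22 i j r s.

Definition act (k : tensor22) (F : mat) : mat :=
  fun i j => / 2 * sumI (fun a => sumI (fun b => k a b i j * F a b)).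

Definition pair (F A : mat) : R :=
  / 2 * sumI (fun i => sumI (fun j => F i j * A i j)).

Definition shift (x : point) (a : idx) (t : R) : point :=
  fun b => if idx_eq_dec a b then x b + t else x b.

Definition partial_is (f : point -> R) (a : idx) (x : point) (l : R) : Prop :=
  derivable_pt_lim (fun t => f (shift x a t)) 0 l.

(* dF = 0 for a 2-form field F (components F x i j). *)
Definition closed2 (F : point -> mat) : Prop :=
  forall (x : point) (i j k : idx), exists di dj dk : R,
    partial_is (fun y => F y j k) i x di /\
    partial_is (fun y => F y k i) j x dj /\
    partial_is (fun y => F y i j) k x dk /\
    di + dj + dk = 0.

(* Re{ e^{i Phi} X } with X = Xr + i Xi. *)
Definition wave (Phi : point -> R) (Xr Xi : mat) : point -> mat :=
  fun x i j => cos (Phi x) * Xr i j - sin (Phi x) * Xi i j.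

Definition plane_wave (k : tensor22) (Phi : point -> R) (Xr Xi Yr Yi : mat) : Prop :=
  (exists xi : idx -> R, (exists a, xi a <> 0) /\
     forall x a, partial_is Phi a x (xi a)) /\
  antisymmetric Xr /\ antisymmetric Xi /\ antisymmetric Yr /\ antisymmetric Yi /\
  ~ (forall i j, Xr i j = 0 /\ Xi i j = 0 /\ Yr i j = 0 /\ Yi i j = 0) /\
  closed2 (wave Phi Xr Xi) /\ closed2 (wave Phi Yr Yi) /\
  (forall x, wave Phi Yr Yi x = act k (wave Phi Xr Xi x)).

Definition nonzero_bivector (A : mat) : Prop :=
  antisymmetric A /\ exists i j, A i j <> 0.

Definition decomposable (k : tensor22) : Prop :=
  exists A B : mat, nonzero_bivector A /\ nonzero_bivector B /\
    forall (Phi : point -> R) (Xr Xi Yr Yi : mat),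
      plane_wave k Phi Xr Xi Yr Yi ->
      (forall x, pair (wave Phi Xr Xi x) A = 0) \/
      (forall x, pair (wave Phi Xr Xi x) B = 0).

(** Write [h] for the inverse metric [g^{ij}] (a quadratic form on covectors).
    For a covector [xi] and a 2-form [X] consider the phase [Phi x = xi . x] and
    the fields [F = Re(e^{i Phi} X)], [G = Re(e^{i Phi} kappa X)].  If [xi] is
    [h]-null and [X = xi /\ alpha] with [h(xi, alpha) = 0], then both [dF = 0]
    and [dG = 0] hold: [xi /\ X = 0] trivially and [xi /\ *X = 0] by the null
    conditions.  Choosing the real part [xi /\ alpha] and the imaginary part
    [xi /\ beta] separately, the plane wave realises [F = Re X] at the origin and
    [F = Im X] a quarter period later.  Hence [kappa] is not decomposable
    once we find ONE null [xi] and [alpha], [beta] (both [h]-orthogonal to [xi])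
    with [X(A) <> 0] for the real part and [X(B) <> 0] for the imaginary part.

    Such an [alpha] exists iff [A xi] is not parallel to [h xi], i.e. iff the
    Cauchy-Schwarz defect [cs_defect A h xi] is nonzero.  The null cone of an
    indefinite nondegenerate form is parametrised polynomially
    ([null_param]), and we show that a nonzero antisymmetric [A] has nonzero
    defect somewhere on it ([defect_somewhere_nonzero]).  Since defects are
    polynomial in the parameter, one parameter serves [A] and [B] at once. *)

From Stdlib Require Import Reals Lra List FunctionalExtensionality Classical.
From Coquelicot Require Import Coquelicot.
Open Scope R_scope.

(** ** Polynomial functions of one real variable *)

Fixpoint poly_le (d : nat) (f : R -> R) : Prop :=
  match d with
  | O => exists c, forall t, f t = c
  | S d' => exists c q, poly_le d' q /\ forall t, f t = c + t * q t
  end.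

Lemma poly_le_ext d : forall f f', (forall t, f t = f' t) -> poly_le d f -> poly_le d f'.
Proof.
  induction d; simpl; intros f f' E H.
  - destruct H as [c Hc]. exists c. intros t. rewrite <- E. auto.
  - destruct H as [c [q [Hq Hf]]]. exists c, q. split; auto.
    intros t. rewrite <- E. auto.
Qed.

Lemma poly_le_succ d : forall f, poly_le d f -> poly_le (S d) f.
Proof.
  induction d; simpl; intros f H.
  - destruct H as [c Hc]. exists c, (fun _ => 0). split.
    + exists 0. auto.
    + intros t. rewrite Hc. ring.
  - destruct H as [c [q [Hq Hf]]]. exists c, q. split; [apply IHd|]; auto.
Qed.

Lemma poly_le_mono d e f : (d <= e)%nat -> poly_le d f -> poly_le e f.
Proof. induction 1; auto. intros Hp. apply poly_le_succ. auto. Qed.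

Lemma poly_le_add d : forall f f', poly_le d f -> poly_le d f' ->
  poly_le d (fun t => f t + f' t).
Proof.
  induction d; simpl; intros f f' Hf Hf'.
  - destruct Hf as [c Hc], Hf' as [c' Hc']. exists (c + c'). intros; rewrite Hc, Hc'; auto.
  - destruct Hf as [c [q [Hq Hf]]], Hf' as [c' [q' [Hq' Hf']]].
    exists (c + c'), (fun t => q t + q' t). split; auto.
    intros t; rewrite Hf, Hf'; ring.
Qed.

Lemma poly_le_scal d : forall a f, poly_le d f -> poly_le d (fun t => a * f t).
Proof.
  induction d; simpl; intros a f Hf.
  - destruct Hf as [c Hc]. exists (a * c). intros; rewrite Hc; auto.
  - destruct Hf as [c [q [Hq Hf]]].
    exists (a * c), (fun t => a * q t). split; auto.
    intros t; rewrite Hf; ring.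
Qed.

Lemma poly_le_mul d : forall e f f', poly_le d f -> poly_le e f' ->
  poly_le (d + e) (fun t => f t * f' t).
Proof.
  induction d; simpl; intros e f f' Hf Hf'.
  - destruct Hf as [c Hc].
    apply poly_le_ext with (fun t => c * f' t); [intros; rewrite Hc; auto|].
    apply poly_le_scal; auto.
  - destruct Hf as [c [q [Hq Hf]]].
    change (poly_le (S (d + e)) (fun t => f t * f' t)).
    apply poly_le_ext with (fun t => c * f' t + t * (q t * f' t));
      [intros t; rewrite Hf; ring|].
    apply poly_le_add.
    + apply poly_le_mono with e; [auto with arith|]. apply poly_le_scal; auto.
    + exists 0, (fun t => q t * f' t). split; [apply IHd; auto | intros; ring].
Qed.

Lemma poly_le_factor d : forall f, poly_le (S d) f ->
  forall a, exists q, poly_le d q /\ forall t, f t = f a + (t - a) * q t.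
Proof.
  induction d; intros f Hf a.
  - destruct Hf as [c [q [[k Hk] Hf]]]. exists (fun _ => k). split.
    + exists k; auto.
    + intros t. rewrite !Hf, !Hk. ring.
  - destruct Hf as [c [p [Hp Hf]]].
    destruct (IHd p Hp a) as [r [Hr Hpr]].
    exists (fun t => p a + t * r t). split.
    + simpl. exists (p a), r. split; auto.
    + intros t. rewrite !Hf, (Hpr t). ring.
Qed.

Lemma poly_le_roots_finite d : forall f, poly_le d f -> (exists t0, f t0 <> 0) ->
  exists l : list R, forall t, f t = 0 -> In t l.
Proof.
  induction d; intros f Hf [t0 Ht0].
  - destruct Hf as [c Hc]. exists nil. intros t Ht. rewrite Hc in Ht, Ht0. lra.
  - destruct (classic (exists a, f a = 0)) as [[a Ha] | Hno].
    + destruct (poly_le_factor d f Hf a) as [q [Hq Hfq]].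
      destruct (IHd q Hq) as [l Hl].
      { exists t0. intros E. apply Ht0. rewrite Hfq, Ha, E. ring. }
      exists (a :: l). intros t Ht. rewrite Hfq, Ha, Rplus_0_l in Ht.
      destruct (Req_dec t a) as [->|Hne]; [left; auto|right].
      apply Rmult_integral in Ht. destruct Ht as [Ht|Ht]; [lra | auto].
    + exists nil. intros t Ht. apply Hno. eauto.
Qed.

Lemma list_upper_bound (l : list R) : exists M, forall x, In x l -> x < M.
Proof.
  induction l as [|a l [M HM]].
  - exists 0. intros x [].
  - exists (Rmax (a + 1) M). intros x [->|Hx].
    + pose proof (Rmax_l (x + 1) M). lra.
    + pose proof (Rmax_r (a + 1) M). specialize (HM x Hx). lra.
Qed.

Definition polynomial (f : R -> R) : Prop := exists d, poly_le d f.

(** Two polynomials that are not identically zero are both nonzero somewhere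
    (beyond all their roots). *)
Lemma polynomial_common_nonzero f f' : polynomial f -> polynomial f' ->
  (exists a, f a <> 0) -> (exists b, f' b <> 0) -> exists t, f t <> 0 /\ f' t <> 0.
Proof.
  intros [d Hf] [e Hf'] Ha Hb.
  destruct (poly_le_roots_finite d f Hf Ha) as [l Hl].
  destruct (poly_le_roots_finite e f' Hf' Hb) as [l' Hl'].
  destruct (list_upper_bound (l ++ l')) as [M HM].
  exists M. split; intros E.
  - specialize (HM M (in_or_app _ _ _ (or_introl (Hl M E)))). lra.
  - specialize (HM M (in_or_app _ _ _ (or_intror (Hl' M E)))). lra.
Qed.

Lemma polynomial_const c : polynomial (fun _ => c).
Proof. exists O. exists c. auto. Qed.

Lemma polynomial_id : polynomial (fun t => t).
Proof. exists 1%nat. exists 0, (fun _ => 1). split; [exists 1; auto | intros; ring]. Qed.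

Lemma polynomial_add f f' : polynomial f -> polynomial f' -> polynomial (fun t => f t + f' t).
Proof.
  intros [d Hf] [e Hf']. exists (Nat.max d e). apply poly_le_add.
  - apply poly_le_mono with d; [apply Nat.le_max_l | auto].
  - apply poly_le_mono with e; [apply Nat.le_max_r | auto].
Qed.

Lemma polynomial_mul f f' : polynomial f -> polynomial f' -> polynomial (fun t => f t * f' t).
Proof. intros [d Hf] [e Hf']. exists (d + e)%nat. apply poly_le_mul; auto. Qed.

Lemma polynomial_opp f : polynomial f -> polynomial (fun t => - f t).
Proof.
  intros [d Hf]. exists d.
  apply poly_le_ext with (fun t => -1 * f t); [intros; ring | apply poly_le_scal; auto].
Qed.

(** ** Polynomial functions on R^4

    A function on [idx -> R] is called polynomial when its restriction to every
    affine line is a polynomial; this is all we need and is closed under the ring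
    operations. *)

Definition vec := idx -> R.

Definition line (y1 y2 : vec) (t : R) : vec := fun i => y1 i + t * (y2 i - y1 i).

Definition poly_on_lines (P : vec -> R) : Prop :=
  forall y1 y2, polynomial (fun t => P (line y1 y2 t)).

Lemma poly_on_lines_const c : poly_on_lines (fun _ => c).
Proof. intros y1 y2. apply polynomial_const. Qed.

Lemma poly_on_lines_coord i : poly_on_lines (fun y => y i).
Proof.
  intros y1 y2. unfold line. apply polynomial_add; [apply polynomial_const|].
  apply polynomial_mul; [apply polynomial_id | apply polynomial_const].
Qed.

Lemma poly_on_lines_add P P' : poly_on_lines P -> poly_on_lines P' ->
  poly_on_lines (fun y => P y + P' y).
Proof. intros H H' y1 y2. apply polynomial_add; auto. Qed.

Lemma poly_on_lines_mul P P' : poly_on_lines P -> poly_on_lines P' ->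
  poly_on_lines (fun y => P y * P' y).
Proof. intros H H' y1 y2. apply polynomial_mul; auto. Qed.

Lemma poly_on_lines_opp P : poly_on_lines P -> poly_on_lines (fun y => - P y).
Proof. intros H y1 y2. apply polynomial_opp; auto. Qed.

Lemma poly_on_lines_sub P P' : poly_on_lines P -> poly_on_lines P' ->
  poly_on_lines (fun y => P y - P' y).
Proof.
  intros H H'. unfold Rminus. apply poly_on_lines_add; [|apply poly_on_lines_opp]; auto.
Qed.

(** Two polynomials nonzero at [y1] resp. [y2] are simultaneously nonzero at
    some point of the line through [y1] and [y2]. *)
Lemma poly_on_lines_common_nonzero P P' y1 y2 : poly_on_lines P -> poly_on_lines P' ->
  P y1 <> 0 -> P' y2 <> 0 -> exists y, P y <> 0 /\ P' y <> 0.
Proof.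
  intros H H' N1 N2.
  assert (E0 : line y1 y2 0 = y1)
    by (apply functional_extensionality; intros i; unfold line; ring).
  assert (E1 : line y1 y2 1 = y2)
    by (apply functional_extensionality; intros i; unfold line; ring).
  destruct (polynomial_common_nonzero (fun t => P (line y1 y2 t))
              (fun t => P' (line y1 y2 t)) (H y1 y2) (H' y1 y2)) as [t [T1 T2]].
  - exists 0. rewrite E0. auto.
  - exists 1. rewrite E1. auto.
  - exists (line y1 y2 t); auto.
Qed.

Ltac solve_poly_on_lines :=
  match goal with
  | |- poly_on_lines (fun y => y ?i) => apply (poly_on_lines_coord i)
  | |- poly_on_lines (fun y => _ + _) => apply poly_on_lines_add; solve_poly_on_lines
  | |- poly_on_lines (fun y => _ - _) => apply poly_on_lines_sub; solve_poly_on_lines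
  | |- poly_on_lines (fun y => _ * _) => apply poly_on_lines_mul; solve_poly_on_lines
  | |- poly_on_lines (fun y => - _) => apply poly_on_lines_opp; solve_poly_on_lines
  | |- poly_on_lines (fun y => ?c) => apply poly_on_lines_const
  end.

(** ** Linear algebra of the inverse metric *)

Definition bil (h : mat) (x y : vec) : R := sumI (fun b => sumI (fun c => x b * h b c * y c)).
Definition dot (x y : vec) : R := sumI (fun i => x i * y i).
Definition raise (h : mat) (x : vec) : vec := fun c => sumI (fun a => h a c * x a).
Definition lower (g : mat) (x : vec) : vec := fun b => sumI (fun a => g b a * x a).
Definition contr (A : mat) (x : vec) : vec := fun j => sumI (fun i => x i * A i j).
Definition lc (a : R) (x : vec) (b : R) (y : vec) : vec := fun i => a * x i + b * y i.
Definition ev (k : idx) : vec := fun i => delta k i.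

Lemma sumI_ext f f' : (forall i, f i = f' i) -> sumI f = sumI f'.
Proof. intros E; unfold sumI; rewrite !E; auto. Qed.

Lemma sum_delta_r (f : idx -> R) c : sumI (fun a => f a * delta a c) = f c.
Proof. unfold sumI, delta; destruct c; simpl; ring. Qed.

Lemma sum_delta_l (f : idx -> R) c : sumI (fun a => delta a c * f a) = f c.
Proof. unfold sumI, delta; destruct c; simpl; ring. Qed.

Ltac rewrite_sym H :=
  try rewrite (H I1 I0); try rewrite (H I2 I0); try rewrite (H I3 I0);
  try rewrite (H I2 I1); try rewrite (H I3 I1); try rewrite (H I3 I2).

Ltac rewrite_antisym A HA :=
  let H0 := fresh in
  assert (H0 : forall i, A i i = 0) by (intros i; specialize (HA i i); lra);
  try rewrite (H0 I0); try rewrite (H0 I1); try rewrite (H0 I2); try rewrite (H0 I3);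
  rewrite_sym HA; clear H0.

Lemma inverse_symmetric (g h : mat) : symmetric g -> is_inverse g h -> symmetric h.
Proof.
  intros Hg Hi i j.
  assert (T : sumI (fun l => h l i * sumI (fun k => g l k * h k j)) =
              sumI (fun k => sumI (fun l => g k l * h l i) * h k j)).
  { unfold sumI; rewrite_sym Hg; ring. }
  rewrite (sumI_ext _ (fun l => h l i * delta l j)) in T by (intros; rewrite Hi; auto).
  rewrite (sumI_ext (fun k => sumI (fun l => g k l * h l i) * h k j)
             (fun k => delta k i * h k j)) in T by (intros; rewrite Hi; auto).
  rewrite sum_delta_r, sum_delta_l in T. auto.
Qed.

Lemma bil_sym h x y : symmetric h -> bil h x y = bil h y x.
Proof. intros Hs; unfold bil, sumI; rewrite_sym Hs; ring. Qed.

Lemma bil_lc_l h a x b y z : bil h (lc a x b y) z = a * bil h x z + b * bil h y z.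
Proof. unfold bil, lc, sumI; ring. Qed.

Lemma bil_lc_r h a x b y z : bil h z (lc a x b y) = a * bil h z x + b * bil h z y.
Proof. unfold bil, lc, sumI; ring. Qed.

Lemma bil_lc_lc h a x b y : symmetric h ->
  bil h (lc a x b y) (lc a x b y) = a * a * bil h x x + 2 * a * b * bil h x y + b * b * bil h y y.
Proof. intros Hs. rewrite bil_lc_l, !bil_lc_r, (bil_sym h y x Hs). ring. Qed.

Lemma bil_ev h i k : bil h (ev i) (ev k) = h i k.
Proof. unfold bil, ev, sumI, delta; destruct i, k; simpl; ring. Qed.

Lemma dot_comm x y : dot x y = dot y x.
Proof. unfold dot, sumI; ring. Qed.

Lemma dot_lc_r a x b y z : dot z (lc a x b y) = a * dot z x + b * dot z y.
Proof. unfold dot, lc, sumI; ring. Qed.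

Lemma dot_scal y a u : dot y (fun j => a * u j) = a * dot y u.
Proof. unfold dot, sumI; ring. Qed.

Lemma dot_ext y f f' : (forall j, f j = f' j) -> dot y f = dot y f'.
Proof. intros E; unfold dot; apply sumI_ext; intros; rewrite E; auto. Qed.

Lemma dot_ev a i : dot a (ev i) = a i.
Proof. unfold dot, ev, sumI, delta; destruct i; simpl; ring. Qed.

Lemma dot_raise h x y : dot x (raise h y) = bil h y x.
Proof. unfold dot, raise, bil, sumI; ring. Qed.

Lemma dot_nonneg x : 0 <= dot x x.
Proof.
  unfold dot, sumI.
  pose proof (Rle_0_sqr (x I0)); pose proof (Rle_0_sqr (x I1));
  pose proof (Rle_0_sqr (x I2)); pose proof (Rle_0_sqr (x I3)); unfold Rsqr in *; lra.
Qed.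

Lemma dot_self_zero (f : vec) : dot f f = 0 -> forall j, f j = 0.
Proof. unfold dot, sumI; intros H j; destruct j; nra. Qed.

Lemma dot_self_pos u : (exists c, u c <> 0) -> dot u u > 0.
Proof.
  intros [c Hc]. pose proof (dot_nonneg u).
  destruct (Rle_lt_or_eq_dec 0 (dot u u) H) as [Hlt | Heq]; [lra|].
  exfalso. apply Hc. apply dot_self_zero. auto.
Qed.

Lemma contr_lc A a x b y j : contr A (lc a x b y) j = a * contr A x j + b * contr A y j.
Proof. unfold contr, lc, sumI; ring. Qed.

Lemma contr_ev A i j : contr A (ev i) j = A i j.
Proof. unfold contr, ev, sumI, delta; destruct i; simpl; ring. Qed.

Lemma contr_skew A x y : antisymmetric A -> dot x (contr A y) = - dot y (contr A x).
Proof. intros HA. unfold dot, contr, sumI. rewrite_antisym A HA. ring. Qed.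

Lemma contr_skew_diag A x : antisymmetric A -> dot x (contr A x) = 0.
Proof. intros HA. pose proof (contr_skew A x x HA). lra. Qed.

Lemma bil_lower g h v z : symmetric g -> is_inverse g h -> bil h (lower g v) z = dot v z.
Proof.
  intros Hg Hi.
  transitivity (sumI (fun c => sumI (fun a => v a * sumI (fun b => g a b * h b c)) * z c)).
  { unfold bil, lower, sumI; rewrite_sym Hg; ring. }
  transitivity (sumI (fun c => sumI (fun a => v a * delta a c) * z c)).
  { apply sumI_ext; intros c; f_equal; apply sumI_ext; intros a; rewrite Hi; auto. }
  apply sumI_ext; intros c; rewrite sum_delta_r; auto.
Qed.

Lemma lower_raise g h x b : symmetric g -> is_inverse g h -> lower g (raise h x) b = x b.
Proof.
  intros Hg Hi. pose proof (inverse_symmetric g h Hg Hi) as Hs.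
  transitivity (sumI (fun a => sumI (fun c => g b c * h c a) * x a)).
  { unfold lower, raise, sumI; rewrite_sym Hs; ring. }
  rewrite (sumI_ext _ (fun a => delta b a * x a)) by (intros; rewrite Hi; auto).
  unfold sumI, delta; destruct b; simpl; ring.
Qed.

Lemma raise_nonzero g h x : symmetric g -> is_inverse g h ->
  (exists i, x i <> 0) -> exists c, raise h x c <> 0.
Proof.
  intros Hg Hi [i Hx]. apply NNPP; intros N. apply Hx.
  rewrite <- (lower_raise g h x i Hg Hi). unfold lower.
  rewrite (sumI_ext _ (fun _ => 0)); [unfold sumI; ring|].
  intros a. apply NNPP; intros Na. apply N. exists a. intros E. apply Na. rewrite E; ring.
Qed.

Lemma bil_nonzero_l h x z : bil h x z <> 0 -> exists i, x i <> 0.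
Proof.
  intros N. apply NNPP; intros N2. apply N. unfold bil.
  rewrite (sumI_ext _ (fun _ => 0)); [unfold sumI; ring|].
  intros b. replace (x b) with 0; [unfold sumI; ring|].
  apply NNPP; intros Nb. apply N2. exists b. auto.
Qed.

Lemma bil_nonzero_r h x z : symmetric h -> bil h x z <> 0 -> exists i, z i <> 0.
Proof. intros Hs N. rewrite bil_sym in N; auto. eapply bil_nonzero_l; eauto. Qed.

(** ** The null cone of the inverse metric *)

(** [h = g^{-1}] is indefinite when [g] is, since [h(g v, g v) = g(v, v)]. *)
Lemma inverse_indefinite g h : symmetric g -> is_inverse g h -> indefinite g ->
  (exists p, bil h p p > 0) /\ (exists q, bil h q q < 0).
Proof.
  intros Hg Hi [[v Hv] [w Hw]].
  assert (E : forall v, bil h (lower g v) (lower g v) =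
                        sumI (fun i => sumI (fun j => g i j * v i * v j))).
  { intros z. rewrite bil_lower; auto. unfold dot, lower, sumI; ring. }
  split; [exists (lower g v) | exists (lower g w)]; rewrite E; auto.
Qed.

(** An indefinite symmetric form has a nonzero null vector, found on the line
    through a positive and a negative vector. *)
Lemma null_vector_exists h p q : symmetric h -> bil h p p > 0 -> bil h q q < 0 ->
  exists n0, bil h n0 n0 = 0 /\ dot n0 n0 > 0.
Proof.
  intros Hs Hp Hq.
  set (P := bil h p p) in *. set (C := bil h p q). set (Q := bil h q q) in *.
  assert (HD : 0 <= C * C - P * Q) by nra.
  set (s := sqrt (C * C - P * Q)).
  assert (Hs2 : s * s = C * C - P * Q) by (apply sqrt_sqrt; auto).
  set (t0 := (- C - s) / Q).
  assert (Ht : Q * t0 = - C - s) by (unfold t0; field; lra).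
  assert (Hroot : P + 2 * t0 * C + t0 * t0 * Q = 0).
  { assert (Q * (P + 2 * t0 * C + t0 * t0 * Q) = 0) by nra.
    apply Rmult_integral in H. destruct H; lra. }
  exists (lc 1 p t0 q). split.
  - rewrite bil_lc_lc; auto. fold P C Q. lra.
  - apply Rnot_le_gt; intros Hle.
    pose proof (dot_self_zero _ (Rle_antisym _ _ Hle (dot_nonneg _))) as Z.
    assert (Ep : p = fun i => - t0 * q i).
    { apply functional_extensionality; intros i. specialize (Z i). unfold lc in Z. lra. }
    assert (P = t0 * t0 * Q) by (unfold P, Q; rewrite Ep; unfold bil, sumI; ring).
    nra.
Qed.

(** A nondegenerate form on R^4 is not of rank at most two: it cannot be
    [lam (a . z) (b . z)].  (Otherwise [delta = lam/2 (g a (x) b + g b (x) a)]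
    and the upper-left 3x3 minor of the identity would vanish.) *)
Lemma inverse_not_rank_two g h a b lam : symmetric g -> is_inverse g h ->
  ~ (forall z, bil h z z = lam * dot a z * dot b z).
Proof.
  intros Hg Hi HQ.
  pose proof (inverse_symmetric g h Hg Hi) as Hs.
  assert (Hh : forall j k, h j k = lam / 2 * (a j * b k + a k * b j)).
  { intros j k.
    pose proof (HQ (lc 1 (ev j) 1 (ev k))) as E1.
    pose proof (HQ (ev j)) as E2. pose proof (HQ (ev k)) as E3.
    rewrite bil_lc_l, !bil_lc_r, !dot_lc_r, !dot_ev, !bil_ev in E1.
    rewrite !dot_ev, !bil_ev in E2, E3.
    rewrite (Hs k j) in E1. nra. }
  set (al := lower g a). set (be := lower g b).
  assert (Hd : forall i k, delta i k = lam / 2 * (al i * b k + be i * a k)).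
  { intros i k. rewrite <- Hi.
    rewrite (sumI_ext _ (fun j => g i j * (lam / 2 * (a j * b k + a k * b j))))
      by (intros; rewrite Hh; auto).
    unfold al, be, lower, sumI; ring. }
  assert (Hminor : forall x00 x01 x02 x10 x11 x12 x20 x21 x22 : R,
     x00 = delta I0 I0 -> x01 = delta I0 I1 -> x02 = delta I0 I2 ->
     x10 = delta I1 I0 -> x11 = delta I1 I1 -> x12 = delta I1 I2 ->
     x20 = delta I2 I0 -> x21 = delta I2 I1 -> x22 = delta I2 I2 ->
     x00 * (x11 * x22 - x12 * x21) - x01 * (x10 * x22 - x12 * x20)
     + x02 * (x10 * x21 - x11 * x20) = 1).
  { intros; subst; unfold delta; simpl; ring. }
  specialize (Hminor _ _ _ _ _ _ _ _ _
     (eq_sym (Hd I0 I0)) (eq_sym (Hd I0 I1)) (eq_sym (Hd I0 I2))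
     (eq_sym (Hd I1 I0)) (eq_sym (Hd I1 I1)) (eq_sym (Hd I1 I2))
     (eq_sym (Hd I2 I0)) (eq_sym (Hd I2 I1)) (eq_sym (Hd I2 I2))).
  ring_simplify in Hminor. lra.
Qed.

Lemma bil_lower_self g h n0 : symmetric g -> is_inverse g h ->
  bil h n0 (lower g n0) = dot n0 n0.
Proof.
  intros Hg Hi. rewrite bil_sym by (apply (inverse_symmetric g h); auto).
  apply bil_lower; auto.
Qed.

(** The [h]-orthogonal complement of a null vector [n0] contains a non-null
    vector; otherwise [h] would have rank at most two. *)
Lemma orthogonal_nonnull_exists g h n0 : symmetric g -> is_inverse g h ->
  bil h n0 n0 = 0 -> dot n0 n0 > 0 -> exists d, bil h n0 d = 0 /\ bil h d d <> 0.
Proof.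
  intros Hg Hi Hn Hpos.
  pose proof (inverse_symmetric g h Hg Hi) as Hs.
  set (r := lower g n0).
  pose proof (bil_lower_self g h n0 Hg Hi) as Lr. fold r in Lr.
  apply NNPP; intros N.
  assert (HQ : forall d, bil h n0 d = 0 -> bil h d d = 0).
  { intros d Hd. apply NNPP; intros Nd. apply N. eauto. }
  set (L := bil h n0 r) in *.
  (* Every [z] is [((L z - h(n0,z) r) + h(n0,z) r)/L] with the first summand in
     the complement, which forces the rank-two form below. *)
  apply (inverse_not_rank_two g h (raise h n0)
           (lc (2 * L) (raise h r) (- bil h r r) (raise h n0)) (/ (L * L)) Hg Hi).
  intros z.
  pose proof (HQ (lc L z (- bil h n0 z) r)) as Hz.
  rewrite bil_lc_r in Hz. fold L in Hz.
  rewrite bil_lc_lc in Hz by auto.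
  rewrite (dot_comm (raise h n0) z), (dot_comm (lc _ _ _ _) z), dot_lc_r, !dot_raise.
  rewrite (bil_sym h r z Hs).
  assert (L <> 0) by lra.
  apply Rmult_eq_reg_l with (L * L); [| nra].
  field_simplify; auto.
  specialize (Hz ltac:(ring)).
  nra.
Qed.

(** Polynomial parametrisation of the null cone by [y], given a null [n0]:
    [null_param y = h(y,y) n0 - 2 h(n0,y) y]. *)
Definition null_param (h : mat) (n0 y : vec) : vec :=
  lc (bil h y y) n0 (-2 * bil h n0 y) y.

Lemma null_param_null h n0 y : symmetric h -> bil h n0 n0 = 0 ->
  bil h (null_param h n0 y) (null_param h n0 y) = 0.
Proof. intros Hs Hn. unfold null_param. rewrite bil_lc_lc, Hn by auto. ring. Qed.

Lemma null_param_pair h n0 d r : bil h n0 n0 = 0 -> bil h n0 d = 0 ->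
  bil h (null_param h n0 d) (null_param h n0 r) = -2 * bil h d d * (bil h n0 r * bil h n0 r).
Proof. intros Hn Hd. unfold null_param. rewrite bil_lc_l, !bil_lc_r, Hn, Hd. ring. Qed.

Lemma poly_on_lines_null_param_pair h n0 w :
  poly_on_lines (fun y => bil h (null_param h n0 y) w).
Proof. unfold null_param, lc, bil, sumI. solve_poly_on_lines. Qed.

(** ** The Cauchy-Schwarz defect of [x _| A] against [h x]

    [cs_defect A h x = |u|^2 |x _| A|^2 - (u . (x _| A))^2] with [u = h x].
    It vanishes iff [x _| A] is parallel to [h x]. *)

Definition cs_defect (A h : mat) (x : vec) : R :=
  let u := raise h x in
  dot u u * dot (contr A x) (contr A x) - dot u (contr A x) * dot u (contr A x).

Lemma cs_defect_support A h x : cs_defect A h x <> 0 -> exists a, x a <> 0.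
Proof.
  intros N. apply NNPP; intros N2. apply N.
  assert (E : forall a, x a = 0) by (intros a; apply NNPP; intros Na; apply N2; eauto).
  unfold cs_defect, dot, raise, contr, sumI. rewrite !E. ring.
Qed.

Lemma poly_on_lines_cs_defect A h n0 : poly_on_lines (fun y => cs_defect A h (null_param h n0 y)).
Proof. unfold cs_defect, dot, raise, contr, null_param, lc, bil, sumI. solve_poly_on_lines. Qed.

Lemma cauchy_schwarz_equality (u m : vec) : dot u u <> 0 ->
  dot u u * dot m m - dot u m * dot u m = 0 -> forall j, m j = (dot u m / dot u u) * u j.
Proof.
  intros Hu HD j.
  assert (Z : dot (fun j => m j * dot u u - dot u m * u j)
                  (fun j => m j * dot u u - dot u m * u j) = 0).
  { transitivity (dot u u * (dot u u * dot m m - dot u m * dot u m));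
      [unfold dot, sumI; ring | rewrite HD; ring]. }
  pose proof (dot_self_zero _ Z j) as Zj. simpl in Zj.
  apply Rmult_eq_reg_r with (dot u u); auto. field_simplify; auto. lra.
Qed.

Lemma cs_defect_zero_eigen g h A x : symmetric g -> is_inverse g h ->
  (exists i, x i <> 0) -> cs_defect A h x = 0 -> exists a, forall j, contr A x j = a * raise h x j.
Proof.
  intros Hg Hi Hx HD.
  destruct (raise_nonzero g h x Hg Hi Hx) as [c Hc].
  pose proof (dot_self_pos _ (ex_intro _ c Hc)).
  eexists. apply cauchy_schwarz_equality; [lra | exact HD].
Qed.

Lemma skew_eigen_opposite h A x y a b : symmetric h -> antisymmetric A ->
  (forall j, contr A x j = a * raise h x j) -> (forall j, contr A y j = b * raise h y j) ->
  bil h x y <> 0 -> a = - b.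
Proof.
  intros Hs HA Ex Ey N.
  pose proof (contr_skew A y x HA) as T.
  rewrite (dot_ext y (contr A x) (fun j => a * raise h x j)) in T by auto.
  rewrite (dot_ext x (contr A y) (fun j => b * raise h y j)) in T by auto.
  rewrite !dot_scal, !dot_raise, (bil_sym h y x Hs) in T.
  apply Rmult_eq_reg_r with (bil h x y); auto. lra.
Qed.

(** Three pairwise non-orthogonal eigenvectors: [a1 = -a2 = a3 = -a1], so
    [a1 = 0] and [x1 _| A = 0]. *)
Lemma skew_eigen_triangle g h A x1 x2 x3 : symmetric g -> is_inverse g h -> antisymmetric A ->
  cs_defect A h x1 = 0 -> cs_defect A h x2 = 0 -> cs_defect A h x3 = 0 ->
  bil h x1 x2 <> 0 -> bil h x1 x3 <> 0 -> bil h x2 x3 <> 0 -> forall j, contr A x1 j = 0.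
Proof.
  intros Hg Hi HA D1 D2 D3 N12 N13 N23.
  pose proof (inverse_symmetric g h Hg Hi) as Hs.
  destruct (cs_defect_zero_eigen g h A x1 Hg Hi (bil_nonzero_l _ _ _ N12) D1) as [a1 E1].
  destruct (cs_defect_zero_eigen g h A x2 Hg Hi (bil_nonzero_l _ _ _ N23) D2) as [a2 E2].
  destruct (cs_defect_zero_eigen g h A x3 Hg Hi (bil_nonzero_r _ _ _ Hs N23) D3) as [a3 E3].
  pose proof (skew_eigen_opposite h A x1 x2 a1 a2 Hs HA E1 E2 N12).
  pose proof (skew_eigen_opposite h A x1 x3 a1 a3 Hs HA E1 E3 N13).
  pose proof (skew_eigen_opposite h A x2 x3 a2 a3 Hs HA E2 E3 N23).
  intros j. rewrite E1. replace a1 with 0 by lra. ring.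
Qed.

(** If the defect vanishes on the whole null cone, then [A] kills the null cone:
    a generic null vector is non-orthogonal to the two fixed null vectors
    [null_param d] and [null_param (g n0)], which are themselves non-orthogonal. *)
Lemma defect_zero_on_cone_kills g h A n0 : symmetric g -> is_inverse g h -> antisymmetric A ->
  bil h n0 n0 = 0 -> dot n0 n0 > 0 ->
  (forall y, cs_defect A h (null_param h n0 y) = 0) ->
  forall y j, contr A (null_param h n0 y) j = 0.
Proof.
  intros Hg Hi HA Hn Hpos HD.
  pose proof (inverse_symmetric g h Hg Hi) as Hs.
  set (r := lower g n0).
  pose proof (bil_lower_self g h n0 Hg Hi) as Lr. fold r in Lr.
  destruct (orthogonal_nonnull_exists g h n0 Hg Hi Hn Hpos) as [d [Ld Qd]].
  set (xd := null_param h n0 d). set (xr := null_param h n0 r).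
  assert (Gdr : bil h xd xr <> 0).
  { unfold xd, xr. rewrite null_param_pair, Lr by auto.
    repeat apply Rmult_integral_contrapositive_currified; lra. }
  pose proof (poly_on_lines_null_param_pair h n0 xd) as PGd.
  pose proof (poly_on_lines_null_param_pair h n0 xr) as PGr.
  destruct (poly_on_lines_common_nonzero _ _ r d PGd PGr) as [y0 [N1 N2]].
  { fold xr. rewrite bil_sym; auto. }
  { auto. }
  intros y j. apply NNPP; intros N.
  assert (PM : poly_on_lines (fun y => contr A (null_param h n0 y) j)).
  { unfold contr, null_param, lc, bil, sumI. solve_poly_on_lines. }
  destruct (poly_on_lines_common_nonzero
     (fun y => bil h (null_param h n0 y) xd * bil h (null_param h n0 y) xr)
     _ y0 y (poly_on_lines_mul _ _ PGd PGr) PM) as [y1 [P1 M1]].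
  { apply Rmult_integral_contrapositive_currified; auto. }
  { auto. }
  apply M1. apply (skew_eigen_triangle g h A (null_param h n0 y1) xd xr); auto.
  - apply HD.
  - apply HD.
  - intros E; apply P1; rewrite E; ring.
  - intros E; apply P1; rewrite E; ring.
Qed.

(** An antisymmetric [A] killing the null cone is zero: polarising gives
    [2 L^2 (z _| A) = phi(z) (n0 _| A)] for a linear [phi], so [A] has rank
    at most one, which for a skew form means [A = 0]. *)
Lemma skew_zero_on_cone g h A n0 : symmetric g -> is_inverse g h -> antisymmetric A ->
  bil h n0 n0 = 0 -> dot n0 n0 > 0 ->
  (forall y j, contr A (null_param h n0 y) j = 0) -> forall i j, A i j = 0.
Proof.
  intros Hg Hi HA Hn Hpos HM.
  pose proof (inverse_symmetric g h Hg Hi) as Hs.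
  set (r := lower g n0).
  pose proof (bil_lower_self g h n0 Hg Hi) as Lr. fold r in Lr.
  set (L := bil h n0 r) in *. set (Qr := bil h r r). set (c := contr A n0).
  set (phi := fun z => 2 * L * bil h r z - bil h n0 z * Qr).
  assert (Mexp : forall y j, contr A (null_param h n0 y) j =
                             bil h y y * c j + (-2 * bil h n0 y) * contr A y j).
  { intros; unfold null_param; rewrite contr_lc; auto. }
  assert (Rank1 : forall z j, 2 * L * L * contr A z j = phi z * c j).
  { intros z j.
    pose proof (HM (lc 1 r 1 z) j) as E1. pose proof (HM r j) as E2. pose proof (HM z j) as E3.
    rewrite Mexp in E1, E2, E3.
    rewrite bil_lc_lc, bil_lc_r, contr_lc in E1 by auto.
    fold L Qr c in E1, E2. fold c in E3.
    assert (E : L * contr A z j = bil h r z * c j - bil h n0 z * contr A r j) by nra.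
    unfold phi.
    transitivity (2 * L * (L * contr A z j)); [ring|]. rewrite E.
    transitivity (2 * L * bil h r z * c j - bil h n0 z * (2 * L * contr A r j)); [ring|].
    replace (2 * L * contr A r j) with (Qr * c j) by nra. ring. }
  assert (Skew : forall z, phi z * dot z c = 0).
  { intros z.
    assert (dot z (fun j => 2 * L * L * contr A z j) = dot z (fun j => phi z * c j))
      by (apply dot_ext; auto).
    rewrite !dot_scal, contr_skew_diag in H; auto. lra. }
  intros i0 j0. apply NNPP; intros N.
  pose proof (Rank1 (ev i0) j0) as K. rewrite contr_ev in K.
  assert (NK : 2 * L * L * A i0 j0 <> 0)
    by (repeat apply Rmult_integral_contrapositive_currified; auto; lra).
  assert (Nphi : phi (ev i0) <> 0) by (intros E; rewrite E in K; lra).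
  assert (Nc : c j0 <> 0) by (intros E; rewrite E in K; lra).
  assert (Pphi : poly_on_lines phi) by (unfold phi, bil, sumI; solve_poly_on_lines).
  assert (Pdc : poly_on_lines (fun z => dot z c)) by (unfold dot, sumI; solve_poly_on_lines).
  destruct (poly_on_lines_common_nonzero phi (fun z => dot z c) (ev i0) c Pphi Pdc Nphi)
    as [z [Z1 Z2]].
  { pose proof (dot_self_pos c (ex_intro _ j0 Nc)). lra. }
  destruct (Rmult_integral _ _ (Skew z)); contradiction.
Qed.

Lemma defect_somewhere_nonzero g h A n0 : symmetric g -> is_inverse g h -> antisymmetric A ->
  bil h n0 n0 = 0 -> dot n0 n0 > 0 -> (exists i j, A i j <> 0) ->
  exists y, cs_defect A h (null_param h n0 y) <> 0.
Proof.
  intros Hg Hi HA Hn Hpos [i [j Nij]].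
  apply NNPP; intros N. apply Nij.
  apply (skew_zero_on_cone g h A n0 Hg Hi HA Hn Hpos).
  apply (defect_zero_on_cone_kills g h A n0 Hg Hi HA Hn Hpos).
  intros y. apply NNPP; intros Ny. apply N. eauto.
Qed.

(** ** Plane waves with a null phase covector *)

Definition wedge (x y : vec) : mat := fun i j => x i * y j - x j * y i.

(** [wedge3_zero xi Z] says [xi /\ Z = 0] for a 2-form [Z]; it is exactly the
    closedness condition for the plane wave with amplitude [Z]. *)
Definition wedge3_zero (xi : vec) (Z : mat) : Prop :=
  forall i j k, xi i * Z j k + xi j * Z k i + xi k * Z i j = 0.

Lemma eps_swap34 a b c d : eps a b d c = - eps a b c d.
Proof. unfold eps. field. Qed.

Lemma eps_swap12 a b c d : eps b a c d = - eps a b c d.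
Proof. unfold eps. field. Qed.

Lemma eps_diag a c d : eps a a c d = 0.
Proof. unfold eps. field. Qed.

Lemma act_hodge_wedge g h xi al i j :
  act (hodge g h) (wedge xi al) i j =
  sqrt (Rabs (det4 g)) * sumI (fun c => sumI (fun d => eps c d i j * raise h xi c * raise h al d)).
Proof.
  unfold act, hodge, wedge, raise, sumI.
  rewrite !eps_diag.
  rewrite !(eps_swap12 I0 I1), !(eps_swap12 I0 I2), !(eps_swap12 I0 I3),
    !(eps_swap12 I1 I2), !(eps_swap12 I1 I3), !(eps_swap12 I2 I3).
  field.
Qed.

Lemma act_id_wedge xi al i j : act Id22 (wedge xi al) i j = wedge xi al i j.
Proof. unfold act, Id22, delta, wedge, sumI; destruct i, j; simpl; field. Qed.

Lemma act_kappa g h C1 C2 X i j :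
  act (kappa_of g h C1 C2) X i j = C1 * act (hodge g h) X i j + C2 * act Id22 X i j.
Proof. unfold act, kappa_of, sumI; ring. Qed.

Lemma act_lin k X Y a b i j :
  act k (fun i j => a * X i j - b * Y i j) i j = a * act k X i j - b * act k Y i j.
Proof. unfold act, sumI; ring. Qed.

Lemma wedge_eps_identity xi u w k r s :
  let E := fun r s => sumI (fun c => sumI (fun d => eps c d r s * u c * w d)) in
  xi k * E r s + xi r * E s k + xi s * E k r =
   dot xi u * sumI (fun d => eps k r s d * w d) - dot xi w * sumI (fun c => eps k r s c * u c).
Proof. unfold dot, sumI, eps; destruct k, r, s; simpl; field. Qed.

Lemma kappa_wedge_closed g h C1 C2 xi al : bil h xi xi = 0 -> bil h al xi = 0 ->
  wedge3_zero xi (act (kappa_of g h C1 C2) (wedge xi al)).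
Proof.
  intros Hu Hw i j k.
  rewrite !act_kappa, !act_hodge_wedge, !act_id_wedge.
  pose proof (wedge_eps_identity xi (raise h xi) (raise h al) i j k) as e. simpl in e.
  rewrite !dot_raise, Hu, Hw in e.
  set (E := fun r s => sumI (fun c => sumI (fun d => eps c d r s * raise h xi c * raise h al d))) in *.
  transitivity (C1 * sqrt (Rabs (det4 g)) * (xi i * E j k + xi j * E k i + xi k * E i j)
     + C2 * (xi i * wedge xi al j k + xi j * wedge xi al k i + xi k * wedge xi al i j)).
  { unfold E; ring. }
  unfold E. rewrite e. unfold wedge; ring.
Qed.

Lemma wedge_closed xi al : wedge3_zero xi (wedge xi al).
Proof. intros i j k; unfold wedge; ring. Qed.

Lemma wedge_antisymmetric xi al : antisymmetric (wedge xi al).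
Proof. intros i j; unfold wedge; ring. Qed.

Lemma act_kappa_wedge_antisymmetric g h C1 C2 xi al :
  antisymmetric (act (kappa_of g h C1 C2) (wedge xi al)).
Proof.
  intros i j. rewrite !act_kappa, !act_hodge_wedge, !act_id_wedge.
  unfold sumI. rewrite !(fun a b => eps_swap34 a b i j). unfold wedge. ring.
Qed.

Lemma pair_wedge A x y : antisymmetric A -> pair (wedge x y) A = dot y (contr A x).
Proof. intros HA. unfold pair, wedge, dot, contr, sumI. rewrite_antisym A HA. field. Qed.

(** The defect is realised by a bivector: for
    [alpha = |u|^2 (xi _| A) - (u . (xi _| A)) u] with [u = h xi] we have
    [h(xi, alpha) = 0] and [(xi /\ alpha)(A) = cs_defect A h xi]. *)
Definition defect_vector (A h : mat) (xi : vec) : vec :=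
  let u := raise h xi in lc (dot u u) (contr A xi) (- dot u (contr A xi)) u.

Lemma defect_vector_orthogonal A h xi : symmetric h -> bil h (defect_vector A h xi) xi = 0.
Proof.
  intros Hs. unfold defect_vector.
  rewrite bil_sym, <- dot_raise, dot_comm, dot_lc_r by auto. ring.
Qed.

Lemma pair_defect_vector A h xi : antisymmetric A ->
  pair (wedge xi (defect_vector A h xi)) A = cs_defect A h xi.
Proof.
  intros HA. rewrite pair_wedge by auto. unfold defect_vector, cs_defect.
  rewrite dot_comm, dot_lc_r, (dot_comm (contr A xi) (raise h xi)). ring.
Qed.

Definition phase (xi : vec) : point -> R := fun x => sumI (fun a => xi a * x a).

Lemma phase_shift xi x a t : phase xi (shift x a t) = phase xi x + xi a * t.
Proof. unfold phase, shift, sumI; destruct a; simpl; ring. Qed.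

Lemma phase_partial xi x a : partial_is (phase xi) a x (xi a).
Proof.
  unfold partial_is.
  replace (fun t => phase xi (shift x a t)) with (fun t => phase xi x + xi a * t)
    by (apply functional_extensionality; intros; rewrite phase_shift; auto).
  apply is_derive_Reals. auto_derive; auto. ring.
Qed.

Lemma wave_partial xi x a z1 z2 :
  partial_is (fun y => cos (phase xi y) * z1 - sin (phase xi y) * z2) a x
    (- sin (phase xi x) * xi a * z1 - cos (phase xi x) * xi a * z2).
Proof.
  unfold partial_is.
  replace (fun t => cos (phase xi (shift x a t)) * z1 - sin (phase xi (shift x a t)) * z2)
    with (fun t => cos (phase xi x + xi a * t) * z1 - sin (phase xi x + xi a * t) * z2)
    by (apply functional_extensionality; intros; rewrite phase_shift; auto).
  apply is_derive_Reals. auto_derive; auto. rewrite Rmult_0_r, Rplus_0_r. ring.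
Qed.

Lemma wave_closed xi Zr Zi : wedge3_zero xi Zr -> wedge3_zero xi Zi ->
  closed2 (wave (phase xi) Zr Zi).
Proof.
  intros Hr Hi x i j k.
  eexists; eexists; eexists.
  split; [apply (wave_partial xi x i (Zr j k) (Zi j k))|].
  split; [apply (wave_partial xi x j (Zr k i) (Zi k i))|].
  split; [apply (wave_partial xi x k (Zr i j) (Zi i j))|].
  transitivity (- sin (phase xi x) * (xi i * Zr j k + xi j * Zr k i + xi k * Zr i j)
                - cos (phase xi x) * (xi i * Zi j k + xi j * Zi k i + xi k * Zi i j)); [ring|].
  rewrite Hr, Hi. ring.
Qed.

Lemma wave_at_origin xi Xr Xi : wave (phase xi) Xr Xi (fun _ => 0) = Xr.
Proof.
  assert (E : phase xi (fun _ => 0) = 0) by (unfold phase, sumI; ring).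
  apply functional_extensionality; intros i; apply functional_extensionality; intros j.
  unfold wave. rewrite E, cos_0, sin_0. ring.
Qed.

Lemma wave_at_quarter_period xi Xr Xi : (exists a, xi a <> 0) ->
  exists x, wave (phase xi) Xr Xi x = Xi.
Proof.
  intros [a Ha].
  exists (fun b => if idx_eq_dec a b then - (PI / 2) / xi a else 0).
  assert (E : phase xi (fun b => if idx_eq_dec a b then - (PI / 2) / xi a else 0) = - (PI / 2))
    by (unfold phase, sumI; destruct a; simpl; field; auto).
  apply functional_extensionality; intros i; apply functional_extensionality; intros j.
  unfold wave. rewrite E, cos_neg, sin_neg, cos_PI2, sin_PI2. ring.
Qed.

Lemma null_plane_wave g h C1 C2 xi al be :
  (exists a, xi a <> 0) -> bil h xi xi = 0 -> bil h al xi = 0 -> bil h be xi = 0 ->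
  (exists i j, wedge xi al i j <> 0) ->
  let k := kappa_of g h C1 C2 in
  plane_wave k (phase xi) (wedge xi al) (wedge xi be)
    (act k (wedge xi al)) (act k (wedge xi be)).
Proof.
  intros Hxi Hnull Hal Hbe [i [j Hij]] k.
  repeat split.
  - exists xi. split; [auto | intros x a; apply phase_partial].
  - apply wedge_antisymmetric.
  - apply wedge_antisymmetric.
  - apply act_kappa_wedge_antisymmetric.
  - apply act_kappa_wedge_antisymmetric.
  - intros Hall. apply Hij. apply Hall.
  - apply wave_closed; apply wedge_closed.
  - apply wave_closed; apply kappa_wedge_closed; auto.
  - intros x. apply functional_extensionality; intros i'; apply functional_extensionality; intros j'.
    unfold wave. rewrite <- act_lin. auto.
Qed.

Lemma pair_nonzero_support X A : pair X A <> 0 -> exists i j, X i j <> 0.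
Proof.
  intros N. apply NNPP; intros N2. apply N.
  assert (E : forall i j, X i j = 0)
    by (intros i j; apply NNPP; intros Nij; apply N2; eauto).
  unfold pair, sumI. rewrite !E. ring.
Qed.

(** Pick a nonzero null [n0] of [h = g^{-1}] and a null covector [xi] on the
    parametrised cone where both defects (for [A] and [B]) are nonzero.  The
    plane wave with amplitude [xi /\ defect_vector A + i xi /\ defect_vector B]
    pairs nontrivially with [A] at the origin and with [B] a quarter period
    later.  (The argument does not use [C1 <> 0].) *)
Theorem mainTheorem8 :
  forall (g ginv : mat) (C1 C2 : R),
    symmetric g -> is_inverse g ginv -> indefinite g ->
    C1 <> 0 ->
    ~ decomposable (kappa_of g ginv C1 C2).
Proof.
  intros g h C1 C2 Hg Hi Hind _ [A [B [[HAa HAn] [[HBa HBn] Hdec]]]].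
  pose proof (inverse_symmetric g h Hg Hi) as Hs.
  destruct (inverse_indefinite g h Hg Hi Hind) as [[p Hp] [q Hq]].
  destruct (null_vector_exists h p q Hs Hp Hq) as [n0 [Hn Hpos]].
  destruct (defect_somewhere_nonzero g h A n0 Hg Hi HAa Hn Hpos HAn) as [yA NA].
  destruct (defect_somewhere_nonzero g h B n0 Hg Hi HBa Hn Hpos HBn) as [yB NB].
  destruct (poly_on_lines_common_nonzero _ _ yA yB (poly_on_lines_cs_defect A h n0)
              (poly_on_lines_cs_defect B h n0) NA NB) as [y [DA DB]].
  set (xi := null_param h n0 y) in *.
  set (al := defect_vector A h xi). set (be := defect_vector B h xi).
  pose proof (pair_defect_vector A h xi HAa) as PA. fold al in PA.
  pose proof (pair_defect_vector B h xi HBa) as PB. fold be in PB.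
  pose proof (cs_defect_support A h xi DA) as Hxi.
  assert (Hwave : plane_wave (kappa_of g h C1 C2) (phase xi) (wedge xi al) (wedge xi be)
            (act (kappa_of g h C1 C2) (wedge xi al)) (act (kappa_of g h C1 C2) (wedge xi be))).
  { apply null_plane_wave; auto.
    - apply null_param_null; auto.
    - apply defect_vector_orthogonal; auto.
    - apply defect_vector_orthogonal; auto.
    - apply (pair_nonzero_support _ A). rewrite PA. auto. }
  destruct (Hdec _ _ _ _ _ Hwave) as [HA0 | HB0].
  - apply DA. rewrite <- PA, <- (wave_at_origin xi (wedge xi al) (wedge xi be)). apply HA0.
  - destruct (wave_at_quarter_period xi (wedge xi al) (wedge xi be) Hxi) as [x Hx].
    apply DB. rewrite <- PB, <- Hx. apply HB0.
Qed.
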